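(* Every equilibrium $(S,I_1,I_2,I_{12},R)$ of the system below with all components nonnegative is of exactly one of the following types: (a) $(0,0,0,0,0)$; (b) $(0,0,0,0,R^{**})$ with $R^{**}=\frac{K}{b}(b-\mu_4')$; (c) $G_2=(S^{**},0,0,0,0)$; (d) $(S,I_1,0,0,R)$ with $S,I_1,R>0$; (e) $(S,0,I_2,0,R)$ with $S,I_2,R>0$; (f) $(S,I_1,I_2,I_{12},R)$ with all five components positive. In particular there is no nonnegative equilibrium with $S=0$ and $I_1+I_2+I_{12}>0$, no nonnegative equilibrium with $I_{12}>0$ and $I_1I_2=0$, and no nonnegative equilibrium with $I_1I_2>0$ and $I_{12}=0$.
   Context: Consider, for $t\ge0$, the system $S'=\big(b(1-\tfrac{N}{K})-\alpha_1I_1-\alpha_2I_2-(\beta_1+\beta_2+\alpha_3)I_{12}-\mu_0\big)S$, $I_1'=\big(b(1-\tfrac{N}{K})+\alpha_1S-\eta_1I_{12}-\gamma_1I_2-\mu_1\big)I_1+\beta_1SI_{12}$, $I_2'=\big(b(1-\tfrac{N}{K})+\alpha_2S-\eta_2I_{12}-\gamma_2I_1-\mu_2\big)I_2+\beta_2SI_{12}$, $I_{12}'=\big(b(1-\tfrac{N}{K})+\alpha_3S+\eta_1I_1+\eta_2I_2-\mu_3\big)I_{12}+(\gamma_1+\gamma_2)I_1I_2$, $R'=\big(b(1-\tfrac{N}{K})-\mu_4'\big)R+\rho_1I_1+\rho_2I_2+\rho_3I_{12}$, where $N=S+I_1+I_2+I_{12}+R$. All parameters $b,K,\alpha_i,\beta_i,\gamma_i,\eta_i,\rho_i,\mu_0,\mu_i'$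 are positive and $\mu_i=\rho_i+\mu_i'$ for $i=1,2,3$. Standing assumptions: $b>\mu_0$, $b>\mu_i$ ($i=1,2,3$), $b>\mu_4'$, and $\mu_0<\mu_4'<\mu_j'$ for $j=1,2,3$. Set $\sigma_k=(\mu_k-\mu_0)/\alpha_k$ ($k=1,2,3$), assumed to satisfy $\sigma_1<\sigma_2<\sigma_3$, and $S^{**}=\frac{K}{b}(b-\mu_0)$. An equilibrium is a point at which all five right-hand sides vanish. *)

From Stdlib Require Import Reals Lra.
Open Scope R_scope.

(* Parameters of the model. mu1p, mu2p, mu3p, mu4p are mu_1', ..., mu_4'. *)
Record params := Params {
  pb : R; pK : R;
  alpha1 : R; alpha2 : R; alpha3 : R;
  beta1 : R; beta2 : R;
  gamma1 : R; gamma2 : R;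
  eta1 : R; eta2 : R;
  rho1 : R; rho2 : R; rho3 : R;
  mu0 : R; mu1p : R; mu2p : R; mu3p : R; mu4p : R }.

Definition mu1 (p : params) : R := rho1 p + mu1p p.
Definition mu2 (p : params) : R := rho2 p + mu2p p.
Definition mu3 (p : params) : R := rho3 p + mu3p p.

Definition sigma1 (p : params) : R := (mu1 p - mu0 p) / alpha1 p.
Definition sigma2 (p : params) : R := (mu2 p - mu0 p) / alpha2 p.
Definition sigma3 (p : params) : R := (mu3 p - mu0 p) / alpha3 p.

Definition Sstarstar (p : params) : R := pK p / pb p * (pb p - mu0 p).
Definition Rstarstar (p : params) : R := pK p / pb p * (pb p - mu4p p).

Definition admissible (p : params) : Prop :=
  0 < pb p /\ 0 < pK p /\
  0 < alpha1 p /\ 0 < alpha2 p /\ 0 < alpha3 p /\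
  0 < beta1 p /\ 0 < beta2 p /\
  0 < gamma1 p /\ 0 < gamma2 p /\
  0 < eta1 p /\ 0 < eta2 p /\
  0 < rho1 p /\ 0 < rho2 p /\ 0 < rho3 p /\
  0 < mu0 p /\ 0 < mu1p p /\ 0 < mu2p p /\ 0 < mu3p p /\ 0 < mu4p p /\
  pb p > mu0 p /\ pb p > mu1 p /\ pb p > mu2 p /\ pb p > mu3 p /\
  pb p > mu4p p /\
  mu0 p < mu4p p /\ mu4p p < mu1p p /\ mu4p p < mu2p p /\ mu4p p < mu3p p /\
  sigma1 p < sigma2 p /\ sigma2 p < sigma3 p.

Definition logi (p : params) (S I1 I2 I12 Rr : R) : R :=
  pb p * (1 - (S + I1 + I2 + I12 + Rr) / pK p).

Definition fS (p : params) (S I1 I2 I12 Rr : R) : R :=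
  (logi p S I1 I2 I12 Rr - alpha1 p * I1 - alpha2 p * I2
   - (beta1 p + beta2 p + alpha3 p) * I12 - mu0 p) * S.

Definition fI1 (p : params) (S I1 I2 I12 Rr : R) : R :=
  (logi p S I1 I2 I12 Rr + alpha1 p * S - eta1 p * I12 - gamma1 p * I2
   - mu1 p) * I1 + beta1 p * S * I12.

Definition fI2 (p : params) (S I1 I2 I12 Rr : R) : R :=
  (logi p S I1 I2 I12 Rr + alpha2 p * S - eta2 p * I12 - gamma2 p * I1
   - mu2 p) * I2 + beta2 p * S * I12.

Definition fI12 (p : params) (S I1 I2 I12 Rr : R) : R :=
  (logi p S I1 I2 I12 Rr + alpha3 p * S + eta1 p * I1 + eta2 p * I2
   - mu3 p) * I12 + (gamma1 p + gamma2 p) * I1 * I2.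

Definition fR (p : params) (S I1 I2 I12 Rr : R) : R :=
  (logi p S I1 I2 I12 Rr - mu4p p) * Rr
  + rho1 p * I1 + rho2 p * I2 + rho3 p * I12.

Definition equilibrium (p : params) (S I1 I2 I12 Rr : R) : Prop :=
  fS p S I1 I2 I12 Rr = 0 /\ fI1 p S I1 I2 I12 Rr = 0 /\
  fI2 p S I1 I2 I12 Rr = 0 /\ fI12 p S I1 I2 I12 Rr = 0 /\
  fR p S I1 I2 I12 Rr = 0.

(** At an equilibrium every infected class with positive size forces a
    positive recovered class, and the equation for [R] then shows that the
    logistic factor lies below [mu4']. Without susceptibles, however, the
    equation of the first nonempty infected class pins the logistic factor at
    [mu_i] plus nonnegative terms, above [mu4']; so infection needs [S > 0].
    Once [S > 0], the source terms [beta_i S I12] make both single strains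
    positive whenever [I12 > 0], and the source [(gamma1 + gamma2) I1 I2] of
    [I12] forbids the two strains to coexist when [I12 = 0]. The disease-free
    equilibria are read off the logistic factor: it equals [mu0] when
    [S > 0] (forcing [R = 0] as [mu0 < mu4']), and [mu4'] when [S = 0 < R]. *)
From Stdlib Require Import Reals Lra.
Open Scope R_scope.

Lemma Rmult_eq0_pos_l (a x : R) : a * x = 0 -> 0 < x -> a = 0.
Proof. intros h hx; destruct (Rmult_integral _ _ h); lra. Qed.

Lemma Rle_0_pos_or_eq0 (x : R) : 0 <= x -> 0 < x \/ x = 0.
Proof. intros hx; destruct (Rle_lt_or_eq_dec 0 x hx); [left | right]; lra. Qed.

Lemma weighted_sum3_pos (a b c x y z : R) :
  0 < a -> 0 < b -> 0 < c -> 0 <= x -> 0 <= y -> 0 <= z -> 0 < x + y + z ->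
  0 < a * x + b * y + c * z.
Proof.
intros ha hb hc hx hy hz hs.
set (m := Rmin a (Rmin b c)).
assert (m <= a /\ m <= b /\ m <= c /\ 0 < m) as (hma & hmb & hmc & hm).
{ unfold m, Rmin; repeat destruct Rle_dec; lra. }
nra.
Qed.

Lemma logistic_level_eq (b K N m : R) :
  0 < b -> 0 < K -> b * (1 - N / K) = m -> N = K / b * (b - m).
Proof. intros hb hK <-; field; lra. Qed.

Ltac unpack_admissible H :=
  destruct H as (hb & hK & ha1 & ha2 & ha3 & hbe1 & hbe2 & hg1 & hg2 & he1 & he2
    & hr1 & hr2 & hr3 & hm0 & hm1 & hm2 & hm3 & hm4 & hbm0 & hbm1 & hbm2 & hbm3
    & hbm4 & h04 & h41 & h42 & h43 & hs12 & hs23).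

Lemma disease_free_equilibria (p : params) (S Rr : R) :
  admissible p -> 0 <= S -> equilibrium p S 0 0 0 Rr ->
  (S = 0 /\ Rr = 0) \/ (S = 0 /\ Rr = Rstarstar p) \/
  (S = Sstarstar p /\ Rr = 0).
Proof.
intros Hadm HS (ES & _ & _ & _ & ER); unpack_admissible Hadm.
unfold fS, fR in ES, ER.
set (L := logi p S 0 0 0 Rr) in ES, ER.
assert (HLR : (L - mu4p p) * Rr = 0) by lra.
destruct (Rle_0_pos_or_eq0 S HS) as [Spos | ->].
- assert (HL : L = mu0 p).
  { assert (h := Rmult_eq0_pos_l _ _ ES Spos); lra. }
  assert (HR0 : Rr = 0).
  { destruct (Rmult_integral _ _ HLR); lra. }
  right; right; split; [|exact HR0].
  unfold L, logi in HL; rewrite HR0, !Rplus_0_r in HL.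
  exact (logistic_level_eq _ _ _ _ hb hK HL).
- destruct (Rmult_integral _ _ HLR) as [HL | HR0]; [right; left | left]; split; auto.
  unfold L, logi in HL; rewrite !Rplus_0_l in HL.
  apply (logistic_level_eq _ _ _ _ hb hK); lra.
Qed.

Section InfectedEquilibrium.

Variables (p : params) (S I1 I2 I12 Rr : R).
Hypothesis Hadm : admissible p.
Hypotheses (HS : 0 <= S) (HI1 : 0 <= I1) (HI2 : 0 <= I2) (HI12 : 0 <= I12)
  (HR : 0 <= Rr).
Hypothesis Heq : equilibrium p S I1 I2 I12 Rr.

Local Notation L := (logi p S I1 I2 I12 Rr).

Lemma strains_exclusive_of_no_coinfected : I12 = 0 -> I1 * I2 = 0.
Proof.
intros H0; destruct Heq as (_ & _ & _ & E12 & _); unpack_admissible Hadm.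
unfold fI12 in E12; rewrite H0, Rmult_0_r, Rplus_0_l, Rmult_assoc in E12.
destruct (Rmult_integral _ _ E12); lra.
Qed.

Lemma strains_pos_of_coinfected : 0 < S -> 0 < I12 -> 0 < I1 /\ 0 < I2.
Proof.
intros Spos I12pos; destruct Heq as (_ & E1 & E2 & _ & _); unpack_admissible Hadm.
unfold fI1, fI2 in E1, E2.
assert (0 < beta1 p * S * I12) by (repeat apply Rmult_lt_0_compat; lra).
assert (0 < beta2 p * S * I12) by (repeat apply Rmult_lt_0_compat; lra).
split.
- destruct (Rle_0_pos_or_eq0 I1 HI1) as [|h]; [assumption|].
  rewrite h, Rmult_0_r in E1; lra.
- destruct (Rle_0_pos_or_eq0 I2 HI2) as [|h]; [assumption|].
  rewrite h, Rmult_0_r in E2; lra.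
Qed.

Lemma recovered_pos_of_infected :
  0 < I1 + I2 + I12 -> L < mu4p p /\ 0 < Rr.
Proof.
intros Ipos; destruct Heq as (_ & _ & _ & _ & ER); unpack_admissible Hadm.
unfold fR in ER.
pose proof (weighted_sum3_pos _ _ _ _ _ _ hr1 hr2 hr3 HI1 HI2 HI12 Ipos).
assert (Hneg : (L - mu4p p) * Rr < 0) by lra.
destruct (Rle_0_pos_or_eq0 Rr HR) as [Rpos | R0].
- split; [|exact Rpos].
  destruct (Rlt_or_le L (mu4p p)) as [|h]; [assumption|].
  assert (0 <= (L - mu4p p) * Rr) by (apply Rmult_le_pos; lra); lra.
- rewrite R0, Rmult_0_r in Hneg; lra.
Qed.

Lemma susceptible_pos_of_infected : 0 < I1 + I2 + I12 -> 0 < S.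
Proof.
intros Ipos.
destruct (recovered_pos_of_infected Ipos) as [HL _].
destruct (Rle_0_pos_or_eq0 S HS) as [|S0]; [assumption|exfalso].
destruct Heq as (_ & E1 & E2 & E12 & _); unpack_admissible Hadm.
unfold fI1, fI2, fI12, mu1, mu2, mu3 in *; rewrite S0 in *.
set (L0 := logi p 0 I1 I2 I12 Rr) in *.
destruct (Rle_0_pos_or_eq0 I1 HI1) as [I1pos | I10].
- assert (h : L0 - eta1 p * I12 - gamma1 p * I2 - (rho1 p + mu1p p) = 0).
  { apply (Rmult_eq0_pos_l _ I1); lra. }
  assert (0 <= eta1 p * I12) by (apply Rmult_le_pos; lra).
  assert (0 <= gamma1 p * I2) by (apply Rmult_le_pos; lra).
  lra.
- rewrite I10 in *.
  destruct (Rle_0_pos_or_eq0 I2 HI2) as [I2pos | I20].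
  + assert (h : L0 - eta2 p * I12 - (rho2 p + mu2p p) = 0).
    { apply (Rmult_eq0_pos_l _ I2); lra. }
    assert (0 <= eta2 p * I12) by (apply Rmult_le_pos; lra).
    lra.
  + rewrite I20 in *.
    assert (h : L0 - (rho3 p + mu3p p) = 0).
    { apply (Rmult_eq0_pos_l _ I12); lra. }
    lra.
Qed.

End InfectedEquilibrium.

Theorem mainTheorem4 (p : params) (S I1 I2 I12 Rr : R) :
  admissible p ->
  0 <= S -> 0 <= I1 -> 0 <= I2 -> 0 <= I12 -> 0 <= Rr ->
  equilibrium p S I1 I2 I12 Rr ->
  ( (* (a) *) (S = 0 /\ I1 = 0 /\ I2 = 0 /\ I12 = 0 /\ Rr = 0)
  \/ (* (b) *) (S = 0 /\ I1 = 0 /\ I2 = 0 /\ I12 = 0 /\ Rr = Rstarstar p)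
  \/ (* (c) *) (S = Sstarstar p /\ I1 = 0 /\ I2 = 0 /\ I12 = 0 /\ Rr = 0)
  \/ (* (d) *) (0 < S /\ 0 < I1 /\ I2 = 0 /\ I12 = 0 /\ 0 < Rr)
  \/ (* (e) *) (0 < S /\ I1 = 0 /\ 0 < I2 /\ I12 = 0 /\ 0 < Rr)
  \/ (* (f) *) (0 < S /\ 0 < I1 /\ 0 < I2 /\ 0 < I12 /\ 0 < Rr) )
  /\ ~ (S = 0 /\ I1 + I2 + I12 > 0)
  /\ ~ (I12 > 0 /\ I1 * I2 = 0)
  /\ ~ (I1 * I2 > 0 /\ I12 = 0).
Proof.
intros Hadm HS HI1 HI2 HI12 HR Heq.
destruct (Rle_0_pos_or_eq0 (I1 + I2 + I12) ltac:(lra)) as [Ipos | I0].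
- pose proof (susceptible_pos_of_infected p S I1 I2 I12 Rr Hadm HS HI1 HI2 HI12 HR Heq Ipos) as Spos.
  destruct (recovered_pos_of_infected p S I1 I2 I12 Rr Hadm HI1 HI2 HI12 HR Heq Ipos) as [_ Rpos].
  pose proof (strains_pos_of_coinfected p S I1 I2 I12 Rr Hadm HI1 HI2 Heq Spos) as coinf.
  pose proof (strains_exclusive_of_no_coinfected p S I1 I2 I12 Rr Hadm Heq) as excl.
  split; [|repeat split; intros [h h']].
  + destruct (Rle_0_pos_or_eq0 I12 HI12) as [I12pos | I120].
    * destruct (coinf I12pos); do 5 right; repeat split; lra.
    * destruct (Rmult_integral _ _ (excl I120)); [do 4 right; left | do 3 right; left];
        repeat split; nra.
  + lra.
  + destruct (coinf h); nra.
  + rewrite (excl h') in h; lra.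
- assert (I1 = 0 /\ I2 = 0 /\ I12 = 0) as (-> & -> & ->) by lra.
  split; [|repeat split; intros [h h']; lra].
  destruct (disease_free_equilibria p S Rr Hadm HS Heq) as [[]|[[]|[]]];
    [left | right; left | right; right; left]; repeat split; assumption.
Qed.
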